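(* Let $S\subseteq\mathbb{N}_0$ be a free numerical semigroup. Then $S=\langle G'\rangle$ for some sequence $G'$ that is both telescopic and minimal.
   Context: For a finite sequence $G=(g_1,\dots,g_k)\in\mathbb{N}_0^k$, $\langle G\rangle$ is the set of $\mathbb{N}_0$-linear combinations of its entries; $G$ is minimal if no proper subsequence generates the same set. With $G_i=(g_1,\dots,g_i)$, $d_i=\gcd(G_i)$, and (for $g_1+g_2>0$, or $g_1>0$ if $k=1$) $c_j=d_{j-1}/d_j$ for $2\le j\le k$, $G$ is telescopic if $c_jg_j\in\langle G_{j-1}\rangle$ for all $2\le j\le k$. A numerical semigroup is a submonoid of $\mathbb{N}_0$ with finite complement; it is free if it equals $\langle G\rangle$ for some telescopic sequence $G$ with $\gcd(G)=1$ (not necessarily minimal). *)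

From mathcomp Require Import all_boot.
Set Implicit Arguments. Unset Strict Implicit. Unset Printing Implicit Defensive.

Definition gen (G : seq nat) (n : nat) : Prop :=
  exists cs : seq nat, size cs = size G /\
    n = \sum_(i < size G) nth 0 cs i * nth 0 G i.

Definition minimal (G : seq nat) : Prop :=
  forall H : seq nat, subseq H G -> size H < size G ->
    ~ (forall n, gen H n <-> gen G n).

(* d_i = gcd(g_1,...,g_i)  (d_0 = 0) *)
Definition dgcd (G : seq nat) (i : nat) : nat := foldr gcdn 0 (take i G).

Definition cc (G : seq nat) (j : nat) : nat := dgcd G j.-1 %/ dgcd G j.

(* The side condition making the c_j well defined:
   g_1 + g_2 > 0 if k >= 2, g_1 > 0 if k = 1. *)
Definition tele_defined (G : seq nat) : Prop :=
  if size G == 1 then 0 < nth 0 G 0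
  else (1 < size G) && (0 < nth 0 G 0 + nth 0 G 1).

Definition telescopic (G : seq nat) : Prop :=
  tele_defined G /\
  forall j, 2 <= j <= size G -> gen (take j.-1 G) (cc G j * nth 0 G j.-1).

Definition numerical_semigroup (S : nat -> Prop) : Prop :=
  S 0 /\ (forall a b, S a -> S b -> S (a + b)) /\
  (exists N, forall n, N <= n -> S n).

Definition free_semigroup (S : nat -> Prop) : Prop :=
  exists G : seq nat, telescopic G /\ foldr gcdn 0 G = 1 /\
    (forall n, S n <-> gen G n).

(* Since d_j = gcd(d_(j-1), g_j), the product c_j g_j equals lcm(d_(j-1), g_j),
   so G is telescopic iff lcm(gcd G_(j-1), g_j) lies in <G_(j-1)> for all j >= 2.
   A telescopic sequence that is not minimal can be shortened without changing
   the generated semigroup or losing telescopicity; iterating gives the theorem.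
   To shorten, take the shortest prefix G_j in which some term lies in the
   semigroup of the others.  If that term is g_j, delete it.  Otherwise it is
   some g_i with i < j, and comparing its expression with the one for
   L = lcm(d_(j-1), g_j) forces g_i = L; then g_j can take the place of g_i.
   For a term y of G_(j-1) after g_i, the gcd E of the terms before y becomes
   gcd(E, g_j), and lcm(gcd(E, g_j), y) = gcd(lcm(E, y), lcm(g_j, y)) = lcm(E, y)
   because E divides g_i = L, which divides lcm(g_j, y). *)

From mathcomp Require Import all_boot zify.
From Stdlib Require Import Classical.

Set Implicit Arguments. Unset Strict Implicit. Unset Printing Implicit Defensive.

Lemma lcmn_gcdl m n p : lcmn (gcdn m n) p = gcdn (lcmn m p) (lcmn n p).
Proof.
have [->|m0] := posnP m; first by rewrite gcd0n lcm0n gcd0n.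
have [->|n0] := posnP n; first by rewrite gcdn0 lcm0n gcdn0.
have [->|p0] := posnP p; first by rewrite !lcmn0.
have mn0 : 0 < gcdn m n by rewrite gcdn_gt0 m0.
apply: eqn_from_log => [||q]; rewrite ?gcdn_gt0 ?lcmn_gt0 ?mn0 ?m0 ?n0 ?p0 //.
by rewrite !(logn_lcm, logn_gcd) ?lcmn_gt0 ?m0 ?n0 ?p0 // maxn_minl.
Qed.

Lemma divn_gcd_mul_lcm m n : m %/ gcdn m n * n = lcmn m n.
Proof. by rewrite divn_mulAC ?dvdn_gcdl. Qed.

Lemma eq_cat_cons (T : Type) (A B A1 B1 : seq T) y : A ++ B = A1 ++ y :: B1 ->
  (exists A2, A = A1 ++ y :: A2 /\ B1 = A2 ++ B) \/
  (exists B0, B = B0 ++ y :: B1 /\ A1 = A ++ B0).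
Proof.
elim: A A1 => [|a A IH] A1 /= E; first by right; exists A1.
case: A1 E => [|a1 A1] /= [-> E]; first by left; exists A; rewrite E.
by case/IH: E => [[A2 [-> ->]]|[B0 [-> ->]]]; [left; exists A2 | right; exists B0].
Qed.

Fixpoint lincomb (G : seq nat) (n : nat) : Prop :=
  if G is a :: G' then exists m t, n = m * a + t /\ lincomb G' t else n = 0.

Lemma lincombP G n : gen G n <-> lincomb G n.
Proof.
elim: G n => [|a G IH] n /=.
  split; first by case=> cs [_ ->]; rewrite big_ord0.
  by move=> ->; exists [::]; rewrite big_ord0.
split.
  case=> [[|c cs] [] //= [Hs] ->]; rewrite big_ord_recl /=.
  by exists c, (\sum_(i < size G) nth 0 cs i * nth 0 G i); split; last by apply/IH; exists cs.
case=> m [t [-> /IH [cs [Hs ->]]]].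
by exists (m :: cs); rewrite /= Hs big_ord_recl.
Qed.

Lemma lincomb0 G : lincomb G 0.
Proof. by elim: G => [|a G IH] //=; exists 0, 0. Qed.

Lemma lincombD G u v : lincomb G u -> lincomb G v -> lincomb G (u + v).
Proof.
elim: G u v => [|a G IH] u v /=; first by move=> -> ->.
move=> [m [t [-> Ht]]] [m' [t' [-> Ht']]].
by exists (m + m'), (t + t'); split; [lia | exact: IH].
Qed.

Lemma lincombMl G k u : lincomb G u -> lincomb G (k * u).
Proof.
elim: G u => [|a G IH] u /=; first by move=> ->; rewrite muln0.
by move=> [m [t [-> Ht]]]; exists (k * m), (k * t); split; [lia | exact: IH].
Qed.

Lemma lincomb_mem G x : x \in G -> lincomb G x.
Proof.
elim: G => [|a G IH] //; rewrite inE => /orP[/eqP ->|/IH Hx].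
  by exists 1, 0; rewrite mul1n addn0; split; last exact: lincomb0.
by exists 0, x.
Qed.

Lemma lincomb_sub A B : (forall y, y \in A -> lincomb B y) ->
  forall n, lincomb A n -> lincomb B n.
Proof.
elim: A => [|a A IH] HA n /=; first by move=> ->; exact: lincomb0.
move=> [m [t [-> Ht]]]; apply: lincombD; first by apply/lincombMl/HA; rewrite inE eqxx.
by apply: IH Ht => y Hy; apply: HA; rewrite inE Hy orbT.
Qed.

Lemma lincomb_subset A B : {subset A <= B} -> forall n, lincomb A n -> lincomb B n.
Proof. by move=> sAB; apply: lincomb_sub => y /sAB /lincomb_mem. Qed.

Lemma eq_lincomb A B : A =i B -> forall n, lincomb A n <-> lincomb B n.
Proof. by move=> eqAB n; split; apply: lincomb_subset => y; rewrite eqAB. Qed.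

Lemma lincomb_drop A x B : lincomb (A ++ B) x ->
  forall n, lincomb (A ++ x :: B) n <-> lincomb (A ++ B) n.
Proof.
move=> Hx n; split; last first.
  by apply: lincomb_subset => y; rewrite !mem_cat inE orbCA => ->; rewrite orbT.
apply: lincomb_sub => y; rewrite mem_cat inE orbCA => /orP[/eqP -> //|].
by rewrite -mem_cat => /lincomb_mem.
Qed.

Lemma lincomb_swap_multiple A g B x C : x %| g ->
  forall n, lincomb (A ++ g :: B ++ x :: C) n <-> lincomb (A ++ x :: B ++ C) n.
Proof.
move=> /dvdnP[k ->] n; rewrite lincomb_drop; last first.
  by apply/lincombMl/lincomb_mem; rewrite !(mem_cat, inE) eqxx !orbT.
by apply: eq_lincomb => y; rewrite !(mem_cat, inE) (orbCA (y \in B)).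
Qed.

Lemma lincomb_cat_cons A x B n : lincomb (A ++ x :: B) n <-> lincomb (x :: A ++ B) n.
Proof. by apply: eq_lincomb => y; rewrite !(mem_cat, inE) orbCA. Qed.

Definition gcds (s : seq nat) : nat := foldr gcdn 0 s.

Lemma gcds_dvd G n : lincomb G n -> gcds G %| n.
Proof.
elim: G n => [|a G IH] n /=; first by move=> ->.
move=> [m [t [-> /IH Ht]]].
by rewrite dvdn_add ?dvdn_mull ?dvdn_gcdl // (dvdn_trans (dvdn_gcdr _ _)).
Qed.

Lemma dvdn_gcds d G : (forall x, x \in G -> d %| x) -> d %| gcds G.
Proof.
elim: G => [|a G IH] //= dG; rewrite dvdn_gcd dG ?inE ?eqxx //=.
by apply: IH => x Hx; apply: dG; rewrite inE Hx orbT.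
Qed.

Lemma eq_gcds A B : (forall n, lincomb A n <-> lincomb B n) -> gcds A = gcds B.
Proof.
move=> eqAB; apply/eqP; rewrite eqn_dvd.
by apply/andP; split; apply: dvdn_gcds => x /lincomb_mem /eqAB /gcds_dvd.
Qed.

Lemma gcds_rcons A x : gcds (rcons A x) = gcdn (gcds A) x.
Proof. by elim: A => [|a A IH] /=; rewrite ?gcdn0 ?gcd0n // IH gcdnA. Qed.

Lemma gcds_cat_cons A x B : gcds (A ++ x :: B) = gcdn x (gcds (A ++ B)).
Proof. by elim: A => [|a A IH] //=; rewrite IH gcdnCA. Qed.

Lemma lincomb_cons_dvd A g B x : x %| g ->
  forall n, lincomb (A ++ g :: B) n -> lincomb (A ++ x :: B) n.
Proof.
move=> /dvdnP[k ->]; apply: lincomb_sub => y; rewrite mem_cat inE orbCA.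
case/orP=> [/eqP ->|yAB].
  by apply/lincombMl/lincomb_mem; rewrite mem_cat inE eqxx orbT.
by apply: lincomb_mem; rewrite mem_cat inE orbCA yAB orbT.
Qed.

Definition telescopic_at (A : seq nat) (x : nat) : Prop := lincomb A (lcmn (gcds A) x).

Definition lcm_telescopic (G : seq nat) : Prop :=
  0 < sumn (take 2 G) /\
  forall A x B, G = A ++ x :: B -> 0 < size A -> telescopic_at A x.

Lemma telescopic_at_eq A A' x : (forall n, lincomb A n <-> lincomb A' n) ->
  telescopic_at A x -> telescopic_at A' x.
Proof. by move=> eqA; rewrite /telescopic_at (eq_gcds eqA) => /eqA. Qed.

Lemma telescopic_condE G i : i < size G ->
  gen (take i G) (cc G i.+1 * nth 0 G i) <-> telescopic_at (take i G) (nth 0 G i).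
Proof.
move=> ltiG; rewrite lincombP /cc /dgcd /= (take_nth 0 ltiG).
by rewrite -!/(gcds _) gcds_rcons divn_gcd_mul_lcm.
Qed.

Lemma telescopicE G : telescopic G <-> lcm_telescopic G.
Proof.
have defE : tele_defined G <-> 0 < sumn (take 2 G).
  by case: G => [|a [|b G]]; rewrite /tele_defined /= ?take0 ?addn0; split.
rewrite /telescopic /lcm_telescopic defE; split=> -[G0 HG]; split=> //.
  move=> A x B defG A0; have ltAG : size A < size G by rewrite defG size_cat /=; lia.
  have := HG (size A).+1; rewrite ltnS A0 ltAG => /(_ isT) /=.
  by rewrite telescopic_condE // defG take_size_cat // nth_cat ltnn subnn.
move=> [|i] // /andP[i0 ltiG]; apply/telescopic_condE => //.
apply: (HG _ _ (drop i.+1 G)); last by rewrite size_takel; lia.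
by rewrite -drop_nth // cat_take_drop.
Qed.

Lemma lcm_telescopic_drop A x B : lcm_telescopic (A ++ x :: B) -> lincomb A x ->
  lcm_telescopic (A ++ B).
Proof.
move=> [G0 HG] Ax; split.
  case: A Ax G0 {HG} => [|a [|b A]] /=; rewrite ?take0 //.
    by move=> ->; case: B => [|b [|c B]] /=; rewrite ?take0 /=; lia.
  by move=> [m [t [-> ->]]]; case: B => [|b [|c B]] /=; rewrite ?take0 /=; nia.
move=> A1 y B1 /(@eq_cat_cons nat) [[A2 [defA _]]|[B0 [defB ->]]] A10.
  by apply: (HG A1 y (A2 ++ x :: B)); rewrite // defA -catA.
apply: (@telescopic_at_eq (A ++ x :: B0)).
  by apply: lincomb_drop; apply: lincomb_subset Ax => z; rewrite mem_cat => ->.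
by apply: (HG _ _ B1); rewrite ?defB -?catA // size_cat /= addnS.
Qed.

Lemma telescopic_at_lcm A D x : D %| gcds A ->
  telescopic_at A (lcmn D x) -> telescopic_at A x.
Proof. by move=> DA; rewrite /telescopic_at lcmnA (lcmn_idPl DA). Qed.

Lemma telescopic_at_dvd A g B x y : x %| g -> g %| lcmn x y ->
  telescopic_at (A ++ g :: B) y -> telescopic_at (A ++ x :: B) y.
Proof.
move=> xg gxy; rewrite /telescopic_at => /(lincomb_cons_dvd xg); congr lincomb.
have -> : gcds (A ++ x :: B) = gcdn (gcds (A ++ g :: B)) x.
  by rewrite !gcds_cat_cons gcdnAC (gcdn_idPr xg).
rewrite lcmn_gcdl; apply/esym/gcdn_idPl; rewrite dvdn_lcm dvdn_lcmr andbT.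
rewrite (dvdn_trans _ gxy) // gcds_dvd //.
by apply: lincomb_mem; rewrite mem_cat inE eqxx orbT.
Qed.

Lemma lcm_telescopic_exchange P1 g P2 x R :
  lcm_telescopic (P1 ++ g :: P2 ++ x :: R) -> 0 < x ->
  g = lcmn (gcds (P1 ++ g :: P2)) x -> lcm_telescopic (P1 ++ x :: P2 ++ R).
Proof.
move=> [G0 HG] x0 defg; set D := gcds _ in defg.
have D_dvd y : y \in P1 ++ g :: P2 -> D %| y by move/lincomb_mem/gcds_dvd.
split; first by case: P1 G0 {HG D D_dvd defg} => [|a [|b P1]] /=; rewrite ?take0 //=; lia.
move=> A1 y B1 /(@eq_cat_cons nat) [[A2 [defP1 _]]|[[|x' B0] []]].
- by move=> A10; apply: (HG A1 y (A2 ++ g :: P2 ++ x :: R)); rewrite // defP1 -catA.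
- move=> /= [<- _]; rewrite cats0 => -> P10; apply: (@telescopic_at_lcm _ D).
    by apply: dvdn_gcds => z zP1; apply: D_dvd; rewrite mem_cat zP1.
  by rewrite -defg; apply: (HG _ _ (P2 ++ x :: R)).
move=> /= [<- /(@eq_cat_cons nat) [[A2 [defP2 _]]|[R0 [defR ->]]]] -> _.
- apply: (@telescopic_at_dvd _ g); first by rewrite defg dvdn_lcmr.
    rewrite defg dvdn_lcm dvdn_lcml andbT (dvdn_trans _ (dvdn_lcmr x y)) //.
    by apply: D_dvd; rewrite defP2 !(mem_cat, inE) eqxx !orbT.
  by apply: (HG _ _ (A2 ++ x :: R)); rewrite ?size_cat /= ?addnS // defP2 -!catA.
apply: (@telescopic_at_eq (P1 ++ g :: P2 ++ x :: R0)).
  by apply: lincomb_swap_multiple; rewrite defg dvdn_lcmr.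
apply: (HG _ _ B1); last by rewrite size_cat /= addnS.
by rewrite defR -catA /= -catA.
Qed.

Definition redundant (G : seq nat) : Prop :=
  exists A g B, G = A ++ g :: B /\ lincomb (A ++ B) g.

Lemma redundant_lcm A g B x : ~ lincomb (A ++ B) g ->
  telescopic_at (A ++ g :: B) x -> lincomb (x :: A ++ B) g ->
  g = lcmn (gcds (A ++ g :: B)) x.
Proof.
rewrite /telescopic_at; set D := gcds _; set L := lcmn D x.
move=> g_irr /lincomb_cat_cons [b [w [defL wAB]]] [a [u [defg uAB]]].
have D_dvd n : lincomb (A ++ B) n -> D %| n.
  move=> /lincomb_subset nAB; apply/gcds_dvd/nAB => y.
  by rewrite !mem_cat inE orbCA => ->; rewrite orbT.
have [m ax] : exists m, a * x = m * L.
  apply/dvdnP; rewrite dvdn_lcm (dvdn_mull _ (dvdnn x)) andbT.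
  rewrite -(dvdn_addl _ (D_dvd _ uAB)) -defg.
  by apply/gcds_dvd/lincomb_mem; rewrite mem_cat inE eqxx orbT.
rewrite ax in defg; have [m0|m_gt0] := posnP m.
  by case: g_irr; rewrite defg m0 add0n.
have [b0|b_gt0] := posnP b.
  by case: g_irr; rewrite defg defL b0 add0n; apply/lincombD/uAB/lincombMl.
(* g = m L + u >= L = b g + w >= g *)
have := leq_pmull L m_gt0; have := leq_pmull g b_gt0; lia.
Qed.

Lemma first_redundant_prefix G : redundant G ->
  exists P x Q, G = P ++ x :: Q /\ ~ redundant P /\ redundant (rcons P x).
Proof.
elim/last_ind: G => [|G y IH]; first by case=> [[|a A] [g [B []]]].
case: (classic (redundant G)) => [/IH [P [x [Q [-> PQ]]]] _|G_irr Gy].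
  by exists P, x, (rcons Q y); rewrite rcons_cat.
by exists G, y, [::]; rewrite cats1.
Qed.

Lemma lcm_telescopic_shrink G : lcm_telescopic G -> redundant G ->
  exists G', [/\ lcm_telescopic G', size G' < size G &
                forall n, lincomb G' n <-> lincomb G n].
Proof.
move=> HG /first_redundant_prefix [P [x [Q [defG [P_irr [A [g [B []]]]]]]]].
case/lastP: B => [|B y].
  rewrite cats1 cats0 => /rcons_inj [defP defx]; subst P x => Ax; exists (A ++ Q); split.
  - by move: HG; rewrite defG => /lcm_telescopic_drop; apply.
  - by rewrite defG !size_cat /= addnS.
  move=> n; rewrite defG lincomb_drop //.
  by apply: lincomb_subset Ax => z; rewrite mem_cat => ->.
rewrite -rcons_cons -rcons_cat => /rcons_inj [defP defy]; subst y => gABx.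
have g_irr : ~ lincomb (A ++ B) g by move=> gAB; apply: P_irr; exists A, g, B.
have defg : g = lcmn (gcds (A ++ g :: B)) x.
  apply: redundant_lcm => //; last first.
    by move: gABx; rewrite -cats1 catA lincomb_cat_cons cats0.
  by apply: (proj2 HG _ _ Q); rewrite -?defP // defP size_cat addnS.
have g_gt0 : 0 < g by case: posnP => // g0; case: g_irr; rewrite g0; apply: lincomb0.
rewrite {}defP in defG; rewrite -catA /= in defG; exists (A ++ x :: B ++ Q); split.
- apply: (lcm_telescopic_exchange _ _ defg); first by rewrite -defG.
  by move: g_gt0; rewrite defg lcmn_gt0 => /andP[].
- by rewrite defG !size_cat /= !size_cat /=; lia.
by move=> n; rewrite defG lincomb_swap_multiple // defg dvdn_lcmr.
Qed.

Lemma lcm_telescopic_irredundant G : lcm_telescopic G ->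
  exists G', [/\ lcm_telescopic G', ~ redundant G' &
                forall n, lincomb G' n <-> lincomb G n].
Proof.
have [k] := ubnP (size G); elim: k G => // k IH G ltGk HG.
have [/(lcm_telescopic_shrink HG) [G1 [HG1 ltG1 eqG1]]|G_irr] := classic (redundant G).
  have [G' [HG' G'_irr eqG']] := IH G1 ltac:(lia) HG1.
  by exists G'; split=> // n; rewrite eqG'.
by exists G.
Qed.

Lemma subseq_drop_one (T : eqType) (H G : seq T) : subseq H G -> size H < size G ->
  exists A g B, G = A ++ g :: B /\ subseq H (A ++ B).
Proof.
elim: G H => [|a G IH] [|h H] //= sHG ltHG; first by exists [::], a, G; rewrite sub0seq.
move: sHG; case: eqP => [<- sHG|_ sHG]; last by exists [::], a, G.
have [A [g [B [-> sH]]]] := IH H sHG ltHG.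
by exists (h :: A), g, B; rewrite /= eqxx.
Qed.

Lemma not_redundant_minimal G : ~ redundant G -> minimal G.
Proof.
move=> G_irr H sHG ltHG eqHG.
have [A [g [B [defG sH]]]] := subseq_drop_one sHG ltHG.
apply: G_irr; exists A, g, B; split=> //.
apply: (lincomb_subset (mem_subseq sH)); apply/lincombP/eqHG/lincombP/lincomb_mem.
by rewrite defG mem_cat inE eqxx orbT.
Qed.

Theorem mainTheorem2 (S : nat -> Prop) :
  numerical_semigroup S -> free_semigroup S ->
  exists G' : seq nat, telescopic G' /\ minimal G' /\
    (forall n, S n <-> gen G' n).
Proof.
move=> _ [G [/telescopicE HG [_ SG]]].
have [G' [HG' G'_irr eqG']] := lcm_telescopic_irredundant HG.
exists G'; split; first exact/telescopicE.
split; first exact: not_redundant_minimal.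
by move=> n; rewrite SG !lincombP eqG'.
Qed.
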